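(* Let $\Sigma=\{1,\dots,q\}^{\mathbb N}$ with shift $\sigma$, $\psi:\Sigma\to\mathbb R$ continuous, and let $\mu$ be a conformal measure for $\psi$ (i.e. $\mathcal L_\psi^*\mu=r(\mathcal L_\psi)\mu$). If there is a constant $C>0$ such that $\liminf_{n\to\infty}\xi_n(\underline x)\le C$ for $\mu$-a.e. $\underline x\in\Sigma$, then $\mu$ is a sequential Gibbs measure for $\psi$.
   Context: $\mathcal L_\psi\phi(\underline x)=\sum_{\underline y\in\sigma^{-1}\underline x}e^{\psi(\underline y)}\phi(\underline y)$ on continuous functions, $r(\mathcal L_\psi)$ its spectral radius, $(\mathcal L_\psi^*\mu)(\phi)=\int\mathcal L_\psi\phi\,d\mu$. Cylinders $[a_0\dots a_{n-1}]=\{\underline y:y_i=a_i,0\le i<n\}$; $\psi^n=\sum_{i<n}\psi\circ\sigma^i$. $\xi_n(\underline x)=\sup_{\underline y\in[x_0\dots x_{n-1}]}\sum_{i=0}^{n-1}|\psi(\sigma^i\underline x)-\psi(\sigma^i\underline y)|$. $\mu$ is a sequential Gibbs measure for $\psi$ if there are constants $K\ge1,P$ such that for $\mu$-a.e. $\underline x$ there is an increasing sequence $n_i(\underline x)$ with $K^{-1}\le\mu([x_j\dots x_{n_i-1}])e^{-\psi^{n_i-j}(\sigma^j\underline x)+(n_i-j)P}\le K$ for all $i$ and $0\le j\le n_i-1$. *)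

From HB Require Import structures.
From mathcomp Require Import all_boot all_order all_algebra.
From mathcomp Require Import all_classical all_reals all_analysis.
Set Implicit Arguments. Unset Strict Implicit. Unset Printing Implicit Defensive.
Import Order.TTheory GRing.Theory Num.Theory.
Local Open Scope ring_scope.
Local Open Scope classical_set_scope.

(* The full shift on q symbols: sequences nat -> 'I_q.-1.+1 ; under the
   hypothesis 0 < q, the alphabet 'I_q.-1.+1 is {0,...,q-1} ~ {1,...,q}. *)
Definition Alph (q : nat) := 'I_q.-1.+1.
HB.instance Definition _ (q : nat) := Finite.on (Alph q).
HB.instance Definition _ (q : nat) := isPointed.Build (Alph q) ord0.
Definition seqs (q : nat) := nat -> Alph q.

Definition cyl (q : nat) (x : seqs q) (n : nat) : set (seqs q) :=
  [set y | forall i, (i < n)%N -> y i = x i].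

Definition cylinders (q : nat) : set (set (seqs q)) :=
  [set A | exists (x : seqs q) (n : nat), A = cyl x n].

(* Sigma with its Borel sigma-algebra (generated by the cylinders, which form a
   countable base of clopen sets of the product topology). *)
Definition Sigma (q : nat) := g_sigma_algebraType (@cylinders q).

Definition shift (q : nat) (x : seqs q) : seqs q := fun k => x k.+1.
Definition shiftn (q : nat) (i : nat) (x : seqs q) : seqs q := fun k => x (k + i)%N.

Definition scons (q : nat) (a : Alph q) (x : seqs q) : seqs q :=
  fun k => if k is k'.+1 then x k' else a.

(* continuity for the product topology of discrete factors *)
Definition continuous_on_shift {R : realType} (q : nat) (f : seqs q -> R) :=
  forall (x : seqs q) (e : R), 0 < e ->
    exists n : nat, forall y, cyl x n y -> `|f x - f y| < e.

Definition birkhoff {R : realType} (q : nat) (psi : seqs q -> R) (n : nat)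
  (x : seqs q) : R := \sum_(i < n) psi (shiftn i x).

Definition transfer {R : realType} (q : nat) (psi : seqs q -> R)
  (phi : seqs q -> R) : seqs q -> R :=
  fun x => \sum_(a : Alph q) expR (psi (scons a x)) * phi (scons a x).

Definition supnorm {R : realType} (q : nat) (f : seqs q -> R) : R :=
  sup [set `|f x| | x in [set: seqs q]].

Definition opnorm {R : realType} (q : nat)
  (T : (seqs q -> R) -> (seqs q -> R)) : R :=
  sup [set supnorm (T phi) | phi in
        [set phi | continuous_on_shift phi /\ supnorm phi <= 1]].

(* spectral radius of L_psi on C(Sigma), by Gelfand's formula
   r = lim_n ||L^n||^{1/n} = inf_{n >= 1} ||L^n||^{1/n} *)
Definition spectral_radius_transfer {R : realType} (q : nat)
  (psi : seqs q -> R) : R :=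
  inf [set (opnorm (iter n.+1 (transfer psi))) `^ (n.+1%:R)^-1
       | n in [set: nat]].

Definition conformal {R : realType} (q : nat) (psi : seqs q -> R)
  (mu : probability (Sigma q) R) :=
  forall phi : seqs q -> R, continuous_on_shift phi ->
    (\int[mu]_x (transfer psi phi x)%:E =
     (spectral_radius_transfer psi)%:E * \int[mu]_x (phi x)%:E)%E.

Definition xi {R : realType} (q : nat) (psi : seqs q -> R) (n : nat)
  (x : seqs q) : \bar R :=
  ereal_sup [set (\sum_(i < n) `|psi (shiftn i x) - psi (shiftn i y)|)%:E
            | y in cyl x n].

Definition cyl_from (q : nat) (x : seqs q) (j m : nat) : set (seqs q) :=
  [set y | forall i, (i < m - j)%N -> y i = x (j + i)%N].

Definition sequential_Gibbs {R : realType} (q : nat) (psi : seqs q -> R)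
  (mu : probability (Sigma q) R) :=
  exists (K P : R), 1 <= K /\
    {ae mu, forall x : Sigma q,
      exists ns : nat -> nat, (forall i, (ns i < ns i.+1)%N) /\
        forall i j, (j < ns i)%N ->
          (K^-1%:E <= mu (cyl_from x j (ns i)) *
             (expR (- birkhoff psi (ns i - j) (shiftn j x)
                    + (ns i - j)%:R * P))%:E
           <= K%:E)%E}.

(* For a cylinder Z = [z_0 ... z_{m-1}], m applications of the transfer
   operator to the indicator of Z give y |-> exp S_m psi(z_0 ... z_{m-1} y), so
   conformality yields r^m mu(Z) = int exp S_m psi(z_0 ... z_{m-1} y) dmu(y).
   If xi_n(x) < D then, for every j <= n, the sum S_{n-j} psi at any point of
   [x_j ... x_{n-1}] is within D of S_{n-j} psi(sigma^j x), hence
   mu([x_j ... x_{n-1}]) r^{n-j} exp(-S_{n-j} psi(sigma^j x)) lies in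
   [e^-D, e^D].  For a.e. x the liminf hypothesis provides infinitely many
   such times n with D = C + 1; take P = log r, where r > 0 by the same bound
   with n - j = 1. *)
From HB Require Import structures.
From mathcomp Require Import all_boot all_order all_algebra.
From mathcomp Require Import all_classical all_reals all_analysis.
From mathcomp Require Import zify ring lra.
Set Implicit Arguments. Unset Strict Implicit.
Import Order.TTheory GRing.Theory Num.Theory.
Local Open Scope ring_scope.
Local Open Scope classical_set_scope.

Section ShiftSpace.
Variables (R : realType) (q : nat).
Implicit Types (f g : seqs q -> R) (x y z : seqs q).

Lemma sub_cyl x m n : (m <= n)%N -> cyl x n `<=` cyl x m.
Proof. by move=> mn y H i im; apply: H; apply: leq_trans mn. Qed.

Lemma continuous_on_shift_cst (c : R) : continuous_on_shift (fun _ : seqs q => c).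
Proof. by move=> x e e0; exists 0%N => y _; rewrite subrr normr0. Qed.

Lemma continuous_on_shiftD f g : continuous_on_shift f -> continuous_on_shift g ->
  continuous_on_shift (fun x => f x + g x).
Proof.
move=> cf cg x e e0.
have e20 : 0 < e / 2 by rewrite divr_gt0.
have [n1 H1] := cf x _ e20; have [n2 H2] := cg x _ e20.
exists (maxn n1 n2) => y hy.
have hf := H1 y (sub_cyl (leq_maxl _ _) hy); have hg := H2 y (sub_cyl (leq_maxr _ _) hy).
rewrite opprD addrACA (le_lt_trans (ler_normD _ _)) //.
by rewrite [e]splitr ltrD.
Qed.

Lemma continuous_on_shift_sum n (F : 'I_n -> seqs q -> R) :
  (forall i, continuous_on_shift (F i)) ->
  continuous_on_shift (fun x => \sum_(i < n) F i x).
Proof.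
elim: n F => [|n IH] F cF.
  by under eq_fun do rewrite big_ord0; exact: continuous_on_shift_cst.
under eq_fun do rewrite big_ord_recr /=.
by apply: continuous_on_shiftD => //; exact: IH.
Qed.

Lemma continuous_on_shift_expR f : continuous_on_shift f ->
  continuous_on_shift (fun x => expR (f x)).
Proof.
move=> cf x e e0.
have /cvgrPdist_lt /(_ e e0) /nbhs_ballP [d /= d0 Hd] := @continuous_expR R (f x).
by have [n Hn] := cf x d d0; exists n => y /Hn /Hd.
Qed.

Lemma continuous_on_shift_comp f (g : seqs q -> seqs q) : continuous_on_shift f ->
  (forall x n, exists N, forall y, cyl x N y -> cyl (g x) n (g y)) ->
  continuous_on_shift (fun x => f (g x)).
Proof.
move=> cf hg x e e0; have [n Hn] := cf (g x) e e0.
by have [N HN] := hg x n; exists N => y /HN /Hn.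
Qed.

Lemma continuous_on_shift_indicM f z m : continuous_on_shift f ->
  continuous_on_shift (fun x => \1_(cyl z m) x * f x).
Proof.
move=> cf x e e0; have [n Hn] := cf x e e0.
exists (maxn n m) => y hy.
have hxy : cyl z m x <-> cyl z m y.
  have hym := sub_cyl (leq_maxr n m) hy.
  by split=> H i im; rewrite -H // hym.
rewrite !indicE; case: (boolP (x \in cyl z m)) => [/set_mem|/negP] hx.
  by rewrite mem_set ?mul1r ?(Hn y (sub_cyl (leq_maxl _ _) hy)) //; apply/hxy.
rewrite memNset ?mul0r ?subrr ?normr0 // => /hxy hy'.
by apply: hx; apply/mem_set.
Qed.

Definition prepend z k y : seqs q := fun i => if (i < k)%N then z i else y (i - k)%N.

Lemma prepend_cyl z k y : cyl z k (prepend z k y).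
Proof. by move=> i ik; rewrite /prepend ik. Qed.

Lemma prepend_scons z k y : prepend z k (scons (z k) y) = prepend z k.+1 y.
Proof.
apply: funext => i; rewrite /prepend /scons.
case: (ltngtP i k) => [ik|ki|->]; rewrite ?subnn ?ltnS ?(ltnW ik) ?leqnn //.
by rewrite leqNgt ki -[(i - k)%N](subnSK ki).
Qed.

Lemma shiftn_prepend z k y : shiftn k (prepend z k y) = y.
Proof. by apply: funext => i; rewrite /shiftn /prepend ltnNge leq_addl addnK. Qed.

Lemma shiftn_shiftn x i j : shiftn i (shiftn j x) = shiftn (j + i) x.
Proof. by apply: funext => k; rewrite /shiftn; congr x; lia. Qed.

Lemma shiftn_prepend_shiftn x i j m y :
  shiftn i (prepend (shiftn j x) m y) = shiftn (j + i) (prepend x (j + m) y).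
Proof.
apply: funext => k; rewrite /shiftn /prepend.
have -> : (k + (j + i) < j + m)%N = (k + i < m)%N by lia.
by case: ifP => _; [congr x | congr y]; lia.
Qed.

Lemma cyl_fromE x j n : cyl_from x j n = cyl (shiftn j x) (n - j).
Proof. by apply: funext => y; apply: propext; split=> H i /H; rewrite addnC. Qed.

End ShiftSpace.

Section TransferCylinder.
Variables (R : realType) (q : nat) (psi : seqs q -> R).
Implicit Types (x y z : seqs q).

Lemma birkhoffS k x : birkhoff psi k.+1 x = birkhoff psi k x + psi (shiftn k x).
Proof. by rewrite /birkhoff big_ord_recr. Qed.

Lemma dist_birkhoff_prepend x j m y :
  `|birkhoff psi m (prepend (shiftn j x) m y) - birkhoff psi m (shiftn j x)| <=
  \sum_(i < j + m) `|psi (shiftn i x) - psi (shiftn i (prepend x (j + m) y))|.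
Proof.
rewrite /birkhoff -sumrB (le_trans (ler_norm_sum _ _ _)) //.
rewrite big_split_ord /= -[X in X <= _]add0r lerD ?sumr_ge0 //.
by apply: ler_sum => i _; rewrite distrC shiftn_prepend_shiftn shiftn_shiftn.
Qed.

(* For k <= m this is the k-th iterate of the transfer operator applied to
   the indicator of [cyl z m]. *)
Definition transfer_cyl z m k y : R :=
  \1_(cyl (shiftn k z) (m - k)) y * expR (birkhoff psi k (prepend z k y)).

Lemma transfer_cylS z m k : (k < m)%N ->
  transfer psi (transfer_cyl z m k) = transfer_cyl z m k.+1.
Proof.
move=> km; apply: funext => y; rewrite /transfer (bigD1 (z k)) //= big1; last first.
  move=> a ha; rewrite /transfer_cyl indicE memNset ?mul0r ?mulr0 // => /(_ 0%N).
  by rewrite subn_gt0 /scons /shiftn add0n => /(_ km) az; rewrite az eqxx in ha.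
have cylE : (scons (z k) y \in cyl (shiftn k z) (m - k)) =
             (y \in cyl (shiftn k.+1 z) (m - k.+1)).
  apply/idP/idP => /set_mem H; apply/mem_set; [move=> i im|move=> [|i] im].
  - have := H i.+1; rewrite /scons /shiftn addSnnS => -> //; lia.
  - by rewrite /shiftn.
  - by rewrite /scons H /shiftn ?addSnnS //; lia.
rewrite addr0 /transfer_cyl !indicE cylE prepend_scons birkhoffS.
by rewrite -prepend_scons shiftn_prepend prepend_scons expRD; ring.
Qed.

Lemma transfer_cyl_full z m y :
  transfer_cyl z m m y = expR (birkhoff psi m (prepend z m y)).
Proof. by rewrite /transfer_cyl subnn indicE mem_set ?mul1r. Qed.

Hypothesis hpsi : continuous_on_shift psi.

Lemma continuous_transfer_cyl z m k : continuous_on_shift (transfer_cyl z m k).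
Proof.
apply/continuous_on_shift_indicM/continuous_on_shift_expR/continuous_on_shift_sum => i.
apply: (continuous_on_shift_comp (g := fun y => shiftn i (prepend z k y))) => // x n.
exists (n + i)%N => y hy j jn; rewrite /shiftn /prepend.
by case: ifP => // /negbT; rewrite -leqNgt => kji; apply: hy; lia.
Qed.

End TransferCylinder.

Section ConformalMeasure.
Variables (R : realType) (q : nat) (psi : seqs q -> R).
Variable mu : probability (Sigma q) R.
Hypotheses (hpsi : continuous_on_shift psi) (hconf : conformal psi mu).
Local Notation lam := (spectral_radius_transfer psi).
Implicit Types z : seqs q.

Lemma measurable_cyl z m : measurable (cyl z m : set (Sigma q)).
Proof. by apply: sub_gen_smallest; exists z, m. Qed.

Lemma measure_cylE z m : mu (cyl z m) = (fine (mu (cyl z m)))%:E.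
Proof. by rewrite fineK // fin_num_measure //; exact: measurable_cyl. Qed.

(* No measurability is needed: the integral of a nonnegative function is a
   supremum over the simple functions below it. *)
Lemma le_integral_ge0 (f g : seqs q -> R) : (forall x, 0 <= f x) ->
  (forall x, f x <= g x) -> (\int[mu]_x (f x)%:E <= \int[mu]_x (g x)%:E)%E.
Proof.
move=> f0 fg; have g0 x : 0 <= g x by rewrite (le_trans (f0 x)).
rewrite !ge0_integralTE => [|x|x]; rewrite ?lee_fin //.
apply: ereal_sup_le => _ [h /= hf <-]; exists h => //= x.
by rewrite (le_trans (hf x)) // lee_fin.
Qed.

Lemma integral_cst_probability (c : R) : (\int[mu]_x c%:E = c%:E)%E.
Proof.
rewrite integral_cst // -[RHS]mule1; congr (_ * _)%E; exact: probability_setT.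
Qed.

Lemma integral_transfer_cyl z m k : (k <= m)%N ->
  (\int[mu]_x (transfer_cyl psi z m k x)%:E = (lam ^+ k)%:E * mu (cyl z m))%E.
Proof.
elim: k => [_|k IH km].
  rewrite mul1e -[X in mu X]setIT -integral_indic //; last exact: measurable_cyl.
  apply: eq_integral => x _; rewrite /transfer_cyl subn0 /birkhoff big_ord0 expR0 mulr1.
  by congr (_ %:E); congr (\1_(cyl _ m) x); apply: funext => i; rewrite /shiftn addn0.
rewrite (eq_integral (fun x : Sigma q => (transfer psi (transfer_cyl psi z m k) x)%:E));
  last by move=> x _; rewrite transfer_cylS.
rewrite hconf; last exact: continuous_transfer_cyl.
by rewrite IH 1?ltnW // muleA -EFinM exprS.
Qed.

Lemma measure_cyl_bounds x j m D : (xi psi (j + m) x < D%:E)%E ->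
  expR (birkhoff psi m (shiftn j x) - D) <= lam ^+ m * fine (mu (cyl (shiftn j x) m))
  <= expR (birkhoff psi m (shiftn j x) + D).
Proof.
move=> hxi; set z := shiftn j x; set B := birkhoff psi m z.
have hB y : `|birkhoff psi m (prepend z m y) - B| <= D.
  rewrite (le_trans (dist_birkhoff_prepend _ _ _ _ _)) // -lee_fin.
  apply/ltW/(le_lt_trans _ hxi); apply: ereal_sup_ubound.
  by exists (prepend x (j + m) y) => //; exact: prepend_cyl.
have cylE := integral_transfer_cyl z (leqnn m); rewrite measure_cylE -EFinM in cylE.
apply/andP; split; rewrite -lee_fin -cylE -integral_cst_probability;
  apply: le_integral_ge0 => y; rewrite ?transfer_cyl_full ?expR_ge0 // ler_expR;
  by have := hB y; rewrite ler_norml; lra.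
Qed.

Lemma spectral_radius_gt0 x n D : (xi psi n.+1 x < D%:E)%E -> 0 < lam.
Proof.
rewrite -addn1 => /measure_cyl_bounds /andP[+ _]; rewrite expr1.
move=> /(lt_le_trans (expR_gt0 _)); apply: contraTT; rewrite -!leNgt => lam_le0.
by apply: mulr_le0_ge0 => //; apply: fine_ge0; exact: measure_ge0.
Qed.

Lemma gibbs_bound x j n D : 0 < lam -> (j <= n)%N -> (xi psi n x < D%:E)%E ->
  ((expR D)^-1%:E <= mu (cyl_from x j n) *
     (expR (- birkhoff psi (n - j) (shiftn j x) + (n - j)%:R * ln lam))%:E
   <= (expR D)%:E)%E.
Proof.
move=> lam0 jn; rewrite -{1}(subnKC jn) => /measure_cyl_bounds /andP[lo hi].
rewrite cyl_fromE measure_cylE -EFinM !lee_fin.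
set m := (n - j)%N in lo hi *; set a := fine _ in lo hi *.
set B := birkhoff _ _ _ in lo hi *.
rewrite [expR (- B + _)]expRD expRM_natl lnK ?posrE // expRN.
rewrite !expRD expRN in lo hi.
have EB := expR_gt0 B; have ED := expR_gt0 D.
have -> : a * ((expR B)^-1 * lam ^+ m) = lam ^+ m * a / expR B by field; rewrite gt_eqF.
apply/andP; split; first by rewrite ler_pdivlMr // mulrC.
by rewrite ler_pdivrMr // [expR D * _]mulrC.
Qed.

End ConformalMeasure.

Lemma limn_einf_lt_frequently (R : realType) (u : (\bar R)^nat) (D : \bar R) :
  (limn_einf u < D)%E -> forall N, exists2 n, (N <= n)%N & (u n < D)%E.
Proof.
move=> uD N; have : (einfs u N < D)%E.
  apply: le_lt_trans uD; rewrite limn_einf_lim.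
  apply: lime_ge; first exact: is_cvg_einfs.
  by exists N => // n /= Nn; exact: nondecreasing_einfs.
by move=> /ereal_inf_lt [_ [n /= Nn <-]] un; exists n.
Qed.

Lemma cofinal_increasing_seq (P : nat -> Prop) :
  (forall N, exists2 n, (N <= n)%N & P n) ->
  exists ns : nat -> nat, (forall i, (ns i < ns i.+1)%N) /\ forall i, P (ns i).
Proof.
move=> hP; have step m : {n | (m < n)%N /\ P n}.
  by have /cid2[n mn Pn] := hP m.+1; exists n.
have [f [_ fS]] := dependent_choice step 0%N.
by exists (f \o S); split => i; [case: (fS i.+1) | case: (fS i)].
Qed.

Unset Implicit Arguments. Set Strict Implicit.

Theorem proposition4 (R : realType) (q : nat) (hq : (0 < q)%N)
  (psi : seqs q -> R) (hpsi : continuous_on_shift psi)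
  (mu : probability (Sigma q) R) (hconf : conformal psi mu)
  (C : R) (hC : 0 < C)
  (hxi : {ae mu, forall x : Sigma q, (limn_einf (fun n => xi psi n x) <= C%:E)%E}) :
  sequential_Gibbs psi mu.
Proof.
set D := C + 1.
exists (expR D), (ln (spectral_radius_transfer psi)).
split; first by rewrite -expR0 ler_expR /D; lra.
apply: filterS hxi => x hx.
have CD : (C%:E < D%:E)%E by rewrite lte_fin /D ltrDl.
have [ns [ns_incr ns_xi]] :=
  cofinal_increasing_seq (limn_einf_lt_frequently (le_lt_trans hx CD)).
have ns1 : (ns 1%N).-1.+1 = ns 1%N by rewrite prednK // (leq_ltn_trans _ (ns_incr 0%N)).
have lam0 : 0 < spectral_radius_transfer psi.
  by apply: (spectral_radius_gt0 hpsi hconf (n := (ns 1%N).-1)); rewrite ns1.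
exists ns; split => // i j ji.
exact: gibbs_bound hpsi hconf _ _ _ _ lam0 (ltnW ji) (ns_xi i).
Qed.
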